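(* Let $\mathbf{k}$ be algebraically closed of characteristic $2$. Let $G=Sp(V,\langle,\rangle)$ (resp. $G=SO(V,Q)$) and let $V=V_1\oplus V_2$ with $V_1,V_2$ mutually orthogonal, so that the restrictions of $\langle,\rangle$ (resp. $Q$) to $V_1,V_2$ are nondegenerate; let $G_j=Sp(V_j)$ (resp. $SO(V_j,Q|_{V_j})$) with Lie algebra $\mathfrak g_j$, and regard $\mathfrak g_1^*\oplus\mathfrak g_2^*\subset\mathfrak g^*$ as in the context. If $\xi_1,\eta_1\in\mathcal N_{\mathfrak g_1^*}$ and $\xi_2,\eta_2\in\mathcal N_{\mathfrak g_2^*}$ satisfy $\mathrm{cl}_{G_1}(\xi_1)\le\mathrm{cl}_{G_1}(\eta_1)$ and $\mathrm{cl}_{G_2}(\xi_2)\le\mathrm{cl}_{G_2}(\eta_2)$, then $\mathrm{cl}_G(\xi_1+\xi_2)\le\mathrm{cl}_G(\eta_1+\eta_2)$.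
   Context: $\mathrm{cl}_H(\xi)$ denotes the coadjoint orbit; $\mathrm c\le\mathrm c'$ means $\mathrm c\subset\overline{\mathrm c'}$. $\mathcal N_{\mathfrak h^*}$ is the set of elements vanishing on the Lie algebra of some Borel subgroup. In the symplectic case, $\mathfrak g^*$ is identified with the space of quadratic forms on $V$ via $\xi\mapsto\alpha_\xi$, $\alpha_\xi(v)=\langle v,Xv\rangle$ where $\xi(x)=\mathrm{tr}(Xx)$ for $x\in\mathfrak{sp}(V)$; in the orthogonal case (with $\beta$ the bilinear form of $Q$, $\mathfrak o(V,Q)=\{x:\beta(xv,v)=0\ \forall v,\ x|_{\mathrm{Rad}\beta}=0\}$), $\mathfrak g^*$ is identified with the space of symplectic (alternating) forms on $V$ via $\xi\mapsto\beta_\xi$, $\beta_\xi(v,w)=\beta(Xv,w)-\beta(v,Xw)$. The inclusion $\mathfrak g_1^*\oplus\mathfrak g_2^*\subset\mathfrak g^*$ sends $(\xi_1,\xi_2)$ to the element whose form is the orthogonal direct sum of the forms of $\xi_1$ on $V_1$ and $\xi_2$ on $V_2$. *)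

From HB Require Import structures.
From mathcomp Require Import all_boot all_order all_algebra.
Set Implicit Arguments. Unset Strict Implicit. Unset Printing Implicit Defensive.
Import GRing.Theory.
Local Open Scope ring_scope.

Section Zariski.
Variables (k : fieldType) (T : Type) (C : (T -> k) -> Prop).

Inductive polyfun : (T -> k) -> Prop :=
  | PFcoord f : C f -> polyfun f
  | PFconst c : polyfun (fun _ => c)
  | PFadd f g : polyfun f -> polyfun g -> polyfun (fun t => f t + g t)
  | PFmul f g : polyfun f -> polyfun g -> polyfun (fun t => f t * g t).

Definition zclosure (S : T -> Prop) (t : T) : Prop :=
  forall f, polyfun f -> (forall s, S s -> f s = 0) -> f t = 0.

Definition zclosed (S : T -> Prop) : Prop := forall t, zclosure S t -> S t.

Definition zconnected (S : T -> Prop) : Prop :=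
  forall Z1 Z2 : T -> Prop, zclosed Z1 -> zclosed Z2 ->
    (forall t, S t -> Z1 t \/ Z2 t) -> (forall t, S t -> Z1 t -> Z2 t -> False) ->
    (forall t, S t -> Z1 t) \/ (forall t, S t -> Z2 t).
End Zariski.

Section MatrixGroups.
Variables (k : fieldType) (n : nat).
Local Notation M := 'M[k]_n.

Definition mx_coord (f : M -> k) : Prop := exists i j, forall A, f A = A i j.

Definition mxsubgroup (H : M -> Prop) : Prop :=
  [/\ H 1%:M, (forall a, H a -> a \in unitmx),
      (forall a b, H a -> H b -> H (a *m b)) & (forall a, H a -> H (invmx a))].

Definition closed_in_GL (H : M -> Prop) : Prop :=
  forall a, a \in unitmx -> zclosure mx_coord H a -> H a.

Definition gen_subgroup (S : M -> Prop) (a : M) : Prop :=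
  forall K, mxsubgroup K -> (forall s, S s -> K s) -> K a.

Definition derived (H : M -> Prop) : M -> Prop :=
  gen_subgroup (fun c => exists a b, [/\ H a, H b &
                  c = a *m b *m invmx a *m invmx b]).

Definition solvable_mx (H : M -> Prop) : Prop :=
  exists m, forall a, iter m derived H a -> a = 1%:M.

Definition borel (G B : M -> Prop) : Prop :=
  [/\ (forall a, B a -> G a), mxsubgroup B, closed_in_GL B,
      zconnected mx_coord B & solvable_mx B] /\
      (forall B', (forall a, B' a -> G a) -> mxsubgroup B' -> closed_in_GL B' ->
         zconnected mx_coord B' -> solvable_mx B' ->
         (forall a, B a -> B' a) -> forall a, B' a -> B a).

Definition identity_component (H : M -> Prop) (a : M) : Prop :=
  exists S : M -> Prop,
    [/\ (forall b, S b -> H b), zconnected mx_coord S, S 1%:M & S a].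

(* Lie algebra = tangent space at 1: x such that df_1(x) = 0 for every
   polynomial function f vanishing on H (the linear coefficient of
   t |-> f(1 + t x) vanishes) *)
Definition lie (H : M -> Prop) (x : M) : Prop :=
  forall f, polyfun mx_coord f -> (forall a, H a -> f a = 0) ->
    exists p : {poly k}, (forall t, f (1%:M + t *: x) = p.[t]) /\ p`_1 = 0.

(* elements of g^* are represented by functions 'M_n -> k, only their values
   on g matter *)
Definition is_dual (g : M -> Prop) (xi : M -> k) : Prop :=
  forall a x y, g x -> g y -> xi (a *: x + y) = a * xi x + xi y.

Definition dual_coord (g : M -> Prop) (f : (M -> k) -> k) : Prop :=
  exists x, g x /\ forall xi, f xi = xi x.

Definition coorbit (G g : M -> Prop) (xi eta : M -> k) : Prop :=
  exists h, G h /\ forall x, g x -> eta x = xi (invmx h *m x *m h).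

Definition orbit_le (G g : M -> Prop) (xi eta : M -> k) : Prop :=
  forall zeta, coorbit G g xi zeta -> zclosure (dual_coord g) (coorbit G g eta) zeta.

Definition nilcone (G g : M -> Prop) (xi : M -> k) : Prop :=
  is_dual g xi /\ exists B, borel G B /\ forall x, lie B x -> xi x = 0.

Definition represents (g : M -> Prop) (xi : M -> k) (X : M) : Prop :=
  forall x, g x -> xi x = \tr (X *m x).

Definition bform (J : M) (v w : 'cV[k]_n) : k := (v^T *m J *m w) 0 0.

Definition symp_nondeg (J : M) : Prop :=
  (forall v, bform J v v = 0) /\ (forall v, (forall w, bform J v w = 0) -> v = 0).

Definition Sp (J : M) (a : M) : Prop :=
  a \in unitmx /\ forall v w, bform J (a *m v) (a *m w) = bform J v w.

Definition qform_of (J X : M) (v : 'cV[k]_n) : k := bform J v (X *m v).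

Definition Qf (A : M) (v : 'cV[k]_n) : k := (v^T *m A *m v) 0 0.
Definition polar (A : M) (v w : 'cV[k]_n) : k := Qf A (v + w) - Qf A v - Qf A w.
Definition radb (A : M) (v : 'cV[k]_n) : Prop := forall w, polar A v w = 0.
Definition quad_nondeg (A : M) : Prop :=
  forall v, radb A v -> Qf A v = 0 -> v = 0.

Definition Ogrp (A : M) (a : M) : Prop :=
  a \in unitmx /\ forall v, Qf A (a *m v) = Qf A v.
Definition SOgrp (A : M) : M -> Prop := identity_component (Ogrp A).

Definition o_lie (A : M) (x : M) : Prop :=
  (forall v, polar A (x *m v) v = 0) /\ (forall v, radb A v -> x *m v = 0).

Definition altform_of (A X : M) (v w : 'cV[k]_n) : k :=
  polar A (X *m v) w - polar A v (X *m w).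
End MatrixGroups.

Section Embed.
Variables (k : fieldType) (n1 n2 : nat).

Definition sp_embed (J1 : 'M[k]_n1) (J2 : 'M[k]_n2)
    (xi1 : 'M[k]_n1 -> k) (xi2 : 'M[k]_n2 -> k) (xi : 'M[k]_(n1 + n2) -> k) :=
  exists X1 X2 X, [/\ represents (lie (Sp J1)) xi1 X1,
    represents (lie (Sp J2)) xi2 X2,
    represents (lie (Sp (block_mx J1 0 0 J2))) xi X &
    forall v1 v2, qform_of (block_mx J1 0 0 J2) X (col_mx v1 v2)
                  = qform_of J1 X1 v1 + qform_of J2 X2 v2].

Definition o_embed (A1 : 'M[k]_n1) (A2 : 'M[k]_n2)
    (xi1 : 'M[k]_n1 -> k) (xi2 : 'M[k]_n2 -> k) (xi : 'M[k]_(n1 + n2) -> k) :=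
  exists X1 X2 X, [/\ represents (o_lie A1) xi1 X1,
    represents (o_lie A2) xi2 X2,
    represents (o_lie (block_mx A1 0 0 A2)) xi X &
    forall v1 v2 w1 w2,
      altform_of (block_mx A1 0 0 A2) X (col_mx v1 v2) (col_mx w1 w2)
      = altform_of A1 X1 v1 w1 + altform_of A2 X2 v2 w2].
End Embed.

(* Regard the sum
   (z1, z2) |-> z1 + z2 of g1^* x g2^* into g^* as a map which is polynomial
   in each variable separately.  Conjugating by the block-diagonal element
   diag(h1, h2) of G turns cl_G1(eta1) x cl_G2(eta2) into cl_G(eta1 + eta2),
   so closures are carried to closures one factor at a time, and the
   G-invariance of the closure of cl_G(eta) handles the remaining G-orbit of
   xi1 + xi2.

   The matrix work consists in checking that the embedding of g1^* (+) g2^*,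
   given by orthogonal sums of quadratic (resp. alternating) forms, is
   z |-> z1(x11) + z2(x22) on g.  The representing matrix of z differs from
   diag(X1, X2) by a matrix whose associated form vanishes on the diagonal,
   and in characteristic 2 the trace form pairs such matrices trivially with
   g.  In the symplectic case this uses the description
   lie(Sp J) = {x | x^T J + J x = 0}, obtained from the transvections
   1 + t J^-1 w w^T. *)

From HB Require Import structures.
From mathcomp Require Import all_boot all_algebra ring.
From Stdlib Require Import FunctionalExtensionality.
Set Implicit Arguments. Unset Strict Implicit. Unset Printing Implicit Defensive.
Import GRing.Theory.
Local Open Scope ring_scope.

Section ZariskiClosure.
Variable k : fieldType.

Lemma polyfun_ext T (C : (T -> k) -> Prop) f f' :
  polyfun C f -> f =1 f' -> polyfun C f'.
Proof. by move=> pf /functional_extensionality <-. Qed.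

Lemma polyfun_comp T T' (C : (T -> k) -> Prop) (C' : (T' -> k) -> Prop)
    (phi : T' -> T) :
  (forall c, C c -> polyfun C' (c \o phi)) ->
  forall f, polyfun C f -> polyfun C' (f \o phi).
Proof.
move=> hC f; elim=> {f} [f /hC //|c|f g _ pf _ pg|f g _ pf _ pg].
- exact: PFconst.
- exact: PFadd.
- exact: PFmul.
Qed.

Lemma polyfun_sum T (C : (T -> k) -> Prop) I (r : seq I) (P : pred I)
    (F : I -> T -> k) :
  (forall i, polyfun C (F i)) -> polyfun C (fun t => \sum_(i <- r | P i) F i t).
Proof.
move=> hF; elim: r => [|a r IH].
  by apply: (polyfun_ext (PFconst C 0)) => t; rewrite big_nil.
case Pa: (P a).
  by apply: (polyfun_ext (PFadd (hF a) IH)) => t; rewrite big_cons Pa.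
by apply: (polyfun_ext IH) => t; rewrite big_cons Pa.
Qed.

Lemma zclosure_sub T (C : (T -> k) -> Prop) (S : T -> Prop) t :
  S t -> zclosure C S t.
Proof. by move=> St f _; apply. Qed.

Lemma zclosure_image T T' (C : (T -> k) -> Prop) (C' : (T' -> k) -> Prop)
    (phi : T' -> T) (S : T -> Prop) (S' : T' -> Prop) t :
  (forall c, C c -> polyfun C' (c \o phi)) ->
  (forall s, S' s -> zclosure C S (phi s)) ->
  zclosure C' S' t -> zclosure C S (phi t).
Proof.
move=> hC hS clt f pf fS; apply: (clt (f \o phi)); first exact: (polyfun_comp hC pf).
by move=> s /hS; apply.
Qed.

Lemma polyfun_dual_agree n (g : 'M[k]_n -> Prop) f z z' :
  polyfun (dual_coord g) f -> (forall x, g x -> z x = z' x) -> f z = f z'.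
Proof.
move=> pf e; elim: pf => {f} [f [x [gx fx]]|//|f h _ ef _ eh|f h _ ef _ eh].
- by rewrite !fx e.
- by rewrite ef eh.
- by rewrite ef eh.
Qed.

Lemma zclosure_dual_agree n (g : 'M[k]_n -> Prop) S z z' :
  (forall x, g x -> z x = z' x) ->
  zclosure (dual_coord g) S z -> zclosure (dual_coord g) S z'.
Proof. by move=> e clz f pf fS; rewrite -(polyfun_dual_agree pf e); apply: clz. Qed.
End ZariskiClosure.

Section PolynomialMaps.
Variables (k : fieldType) (n : nat).

Definition polymx p q (F : 'M[k]_n -> 'M[k]_(p, q)) : Prop :=
  forall i j, polyfun (@mx_coord k n) (fun a => F a i j).

Lemma polymx_id : polymx id.
Proof. by move=> i j; apply: PFcoord; exists i, j. Qed.

Lemma polymx_const p q (B : 'M[k]_(p, q)) : polymx (fun _ => B).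
Proof. by move=> i j; apply: PFconst. Qed.

Lemma polymxD p q (F F' : 'M[k]_n -> 'M[k]_(p, q)) :
  polymx F -> polymx F' -> polymx (fun a => F a + F' a).
Proof.
move=> pF pF' i j; apply: (polyfun_ext (PFadd (pF i j) (pF' i j))) => a.
by rewrite mxE.
Qed.

Lemma polymxM p q r (F : 'M[k]_n -> 'M[k]_(p, q)) (F' : 'M[k]_n -> 'M[k]_(q, r)) :
  polymx F -> polymx F' -> polymx (fun a => F a *m F' a).
Proof.
move=> pF pF' i j.
apply: (polyfun_ext (polyfun_sum _ predT (fun l => PFmul (pF i l) (pF' l j)))).
by move=> a; rewrite mxE.
Qed.

Lemma polymx_ext p q (F F' : 'M[k]_n -> 'M[k]_(p, q)) :
  polymx F -> F =1 F' -> polymx F'.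
Proof. by move=> pF e i j; apply: (polyfun_ext (pF i j)) => a; rewrite e. Qed.

Lemma polymx_tr p q (F : 'M[k]_n -> 'M[k]_(p, q)) :
  polymx F -> polymx (fun a => (F a)^T).
Proof. by move=> pF i j; apply: (polyfun_ext (pF j i)) => a; rewrite mxE. Qed.

Lemma polyfun_polymx_comp m (phi : 'M[k]_n -> 'M[k]_m) f :
  polymx phi -> polyfun (@mx_coord k m) f -> polyfun (@mx_coord k n) (f \o phi).
Proof.
move=> pphi; apply: polyfun_comp => c [i [j ce]].
by apply: (polyfun_ext (pphi i j)) => a; rewrite /= ce.
Qed.
End PolynomialMaps.

Section Connectedness.
Variable k : fieldType.

Lemma polymx_block_diag_l n1 n2 (c : 'M[k]_n2) :
  polymx (fun a : 'M[k]_n1 => block_mx a 0 0 c).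
Proof.
apply: (@polymx_ext _ _ _ _
  (fun a => col_mx 1%:M 0 *m a *m row_mx 1%:M 0 + block_mx 0 0 0 c)).
  apply: polymxD; last exact: polymx_const.
  apply: polymxM; last exact: polymx_const.
  by apply: polymxM; [apply: polymx_const | apply: polymx_id].
move=> a; rewrite mul_col_mx mul_col_row add_block_mx.
by rewrite !mul1mx !mulmx1 !mul0mx !mulmx0 !addr0 !add0r.
Qed.

Lemma polymx_block_diag_r n1 n2 (c : 'M[k]_n1) :
  polymx (fun b : 'M[k]_n2 => block_mx c 0 0 b).
Proof.
apply: (@polymx_ext _ _ _ _
  (fun b => col_mx 0 1%:M *m b *m row_mx 0 1%:M + block_mx c 0 0 0)).
  apply: polymxD; last exact: polymx_const.
  apply: polymxM; last exact: polymx_const.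
  by apply: polymxM; [apply: polymx_const | apply: polymx_id].
move=> b; rewrite mul_col_mx mul_col_row add_block_mx.
by rewrite !mul1mx !mulmx1 !mul0mx !mulmx0 !addr0 !add0r.
Qed.

Lemma zclosed_preimage m n (phi : 'M[k]_m -> 'M[k]_n) Z :
  polymx phi -> zclosed (@mx_coord k n) Z -> zclosed (@mx_coord k m) (Z \o phi).
Proof.
move=> pphi cZ t clt; apply: cZ => f pf fZ.
exact: (clt (f \o phi) (polyfun_polymx_comp pphi pf) (fun s => fZ (phi s))).
Qed.

Lemma zconnected_image m n (phi : 'M[k]_m -> 'M[k]_n) S :
  polymx phi -> zconnected (@mx_coord k m) S ->
  zconnected (@mx_coord k n) (fun b => exists2 a, S a & b = phi a).
Proof.
move=> pphi cS Z1 Z2 c1 c2 cov dis.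
have [h|h] := cS (Z1 \o phi) (Z2 \o phi)
  (zclosed_preimage pphi c1) (zclosed_preimage pphi c2)
  (fun a Sa => cov _ (ex_intro2 _ _ a Sa erefl))
  (fun a Sa => dis _ (ex_intro2 _ _ a Sa erefl)).
- by left => _ [a Sa ->]; apply: h.
- by right => _ [a Sa ->]; apply: h.
Qed.

Lemma zconnected_union n (S U : 'M[k]_n -> Prop) :
  zconnected (@mx_coord k n) S -> (forall a, S a -> U a) ->
  (forall u, U u -> exists T, [/\ zconnected (@mx_coord k n) T,
      (forall b, T b -> U b), T u & exists2 s, S s & T s]) ->
  zconnected (@mx_coord k n) U.
Proof.
move=> cS SU hT Z1 Z2 c1 c2 cov dis.
have cover T : (forall b, T b -> U b) -> forall b, T b -> Z1 b \/ Z2 b.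
  by move=> TU b /TU; apply: cov.
have disj T : (forall b, T b -> U b) -> forall b, T b -> Z1 b -> Z2 b -> False.
  by move=> TU b /TU; apply: dis.
have [h1|h2] := cS Z1 Z2 c1 c2 (cover S SU) (disj S SU).
- left => u Uu; have [T [cT TU Tu [s Ss Ts]]] := hT u Uu.
  have [t1|t2] := cT Z1 Z2 c1 c2 (cover T TU) (disj T TU); first exact: t1.
  by case: (dis s (SU s Ss) (h1 s Ss) (t2 s Ts)).
- right => u Uu; have [T [cT TU Tu [s Ss Ts]]] := hT u Uu.
  have [t1|t2] := cT Z1 Z2 c1 c2 (cover T TU) (disj T TU); last exact: t2.
  by case: (dis s (SU s Ss) (t1 s Ts) (h2 s Ss)).
Qed.

Lemma zconnected1 n (a0 : 'M[k]_n) : zconnected (@mx_coord k n) (eq^~ a0).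
Proof.
by move=> Z1 Z2 _ _ cov _; case: (cov a0 erefl) => h; [left|right] => a ->.
Qed.
End Connectedness.

Section CoadjointAction.
Variable k : fieldType.

Lemma invmxM n (a b : 'M[k]_n) : a \in unitmx -> b \in unitmx ->
  invmx (a *m b) = invmx b *m invmx a.
Proof.
move=> ua ub.
have e : invmx b *m invmx a *m (a *m b) = 1%:M.
  by rewrite -mulmxA (mulKmx ua) mulVmx.
by rewrite -[LHS]mul1mx -e -mulmxA mulmxV ?mulmx1 // unitmx_mul ua ub.
Qed.

Definition coact n (h : 'M[k]_n) (z : 'M[k]_n -> k) : 'M[k]_n -> k :=
  fun x => z (invmx h *m x *m h).

Definition dual_block n1 n2 (z1 : 'M[k]_n1 -> k) (z2 : 'M[k]_n2 -> k) :
  'M[k]_(n1 + n2) -> k := fun x => z1 (ulsubmx x) + z2 (drsubmx x).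

Definition unit_submonoid n (H : 'M[k]_n -> Prop) : Prop :=
  [/\ H 1%:M, forall a, H a -> a \in unitmx &
      forall a b, H a -> H b -> H (a *m b)].

Lemma coactM n (h h' : 'M[k]_n) z : h \in unitmx -> h' \in unitmx ->
  coact (h *m h') z =1 coact h (coact h' z).
Proof. by move=> uh uh' x; rewrite /coact invmxM // !mulmxA. Qed.

Lemma coact_block n1 n2 (h1 : 'M[k]_n1) (h2 : 'M[k]_n2) z1 z2 :
  h1 \in unitmx -> h2 \in unitmx ->
  coact (block_mx h1 0 0 h2) (dual_block z1 z2)
    =1 dual_block (coact h1 z1) (coact h2 z2).
Proof.
move=> u1 u2 x; rewrite /coact /dual_block.
rewrite invmx_block_diag ?block_diag_mx_unit ?u1 ?u2 //.
rewrite -[x]submxK !mulmx_block !block_mxKul !block_mxKdr.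
by rewrite !mul0mx !mulmx0 !addr0 !add0r.
Qed.

Lemma coorbit_refl n (H g : 'M[k]_n -> Prop) z : H 1%:M -> coorbit H g z z.
Proof. by exists 1%:M; split => // x _; rewrite invmx1 mul1mx mulmx1. Qed.

Section OrbitClosureBlock.
Variables (n1 n2 : nat).
Variables (G g : 'M[k]_(n1 + n2) -> Prop).
Variables (G1 g1 : 'M[k]_n1 -> Prop) (G2 g2 : 'M[k]_n2 -> Prop).
Hypotheses (monG : unit_submonoid G) (monG1 : unit_submonoid G1)
  (monG2 : unit_submonoid G2).
Hypothesis g_conj : forall h x, G h -> g x -> g (invmx h *m x *m h).
Hypothesis G_block : forall h1 h2, G1 h1 -> G2 h2 -> G (block_mx h1 0 0 h2).
Hypothesis g_block : forall x, g x -> g1 (ulsubmx x) /\ g2 (drsubmx x).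

Lemma coorbit_coact h eta s : G h ->
  coorbit G g eta s -> coorbit G g eta (coact h s).
Proof.
have [_ unitG mulG] := monG.
move=> Gh [h' [Gh' es]]; exists (h *m h'); split; first exact: mulG.
move=> x gx; rewrite -[RHS]/(coact (h *m h') eta x) coactM ?unitG //.
exact: es (g_conj Gh gx).
Qed.

Lemma coorbit_block eta eta1 eta2 s1 s2 :
  (forall x, g x -> eta x = dual_block eta1 eta2 x) ->
  coorbit G1 g1 eta1 s1 -> coorbit G2 g2 eta2 s2 ->
  coorbit G g eta (dual_block s1 s2).
Proof.
have [[_ unitG1 _] [_ unitG2 _]] := (monG1, monG2).
move=> eeta [h1 [G1h es1]] [h2 [G2h es2]].
exists (block_mx h1 0 0 h2); split; first exact: G_block.
move=> x gx; have [g1x g2x] := g_block gx.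
rewrite eeta; last by apply: g_conj => //; apply: G_block.
rewrite -[RHS]/(coact (block_mx h1 0 0 h2) (dual_block eta1 eta2) x).
by rewrite coact_block ?unitG1 ?unitG2 // /dual_block es1 // es2.
Qed.

Lemma dual_coord_coact h : G h -> forall c, dual_coord g c ->
  polyfun (dual_coord g) (c \o coact h).
Proof.
move=> Gh c [x [gx ce]]; apply: PFcoord; exists (invmx h *m x *m h).
by split; [apply: g_conj | move=> z; rewrite /= ce].
Qed.

Lemma dual_coord_block_l (z2 : 'M[k]_n2 -> k) c : dual_coord g c ->
  polyfun (dual_coord g1) (fun z1 => c (dual_block z1 z2)).
Proof.
move=> [x [gx ce]]; have [g1x _] := g_block gx.
apply: (polyfun_ext (PFadd (PFcoord _) (PFconst _ (z2 (drsubmx x))))).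
  by exists (ulsubmx x).
by move=> z1; rewrite /= ce.
Qed.

Lemma dual_coord_block_r (z1 : 'M[k]_n1 -> k) c : dual_coord g c ->
  polyfun (dual_coord g2) (fun z2 => c (dual_block z1 z2)).
Proof.
move=> [x [gx ce]]; have [_ g2x] := g_block gx.
apply: (polyfun_ext (PFadd (PFconst _ (z1 (ulsubmx x))) (PFcoord _))).
  by exists (drsubmx x).
by move=> z2; rewrite /= ce.
Qed.

Lemma zclosure_dual_block xi1 eta1 xi2 eta2 eta :
  orbit_le G1 g1 xi1 eta1 -> orbit_le G2 g2 xi2 eta2 ->
  (forall x, g x -> eta x = dual_block eta1 eta2 x) ->
  zclosure (dual_coord g) (coorbit G g eta) (dual_block xi1 xi2).
Proof.
have [[G11 _ _] [G21 _ _]] := (monG1, monG2).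
move=> le1 le2 eeta.
apply: (zclosure_image (@dual_coord_block_r xi1)
          _ (le2 _ (coorbit_refl g2 xi2 G21))) => s2 Os2.
apply: (zclosure_image (@dual_coord_block_l s2)
          _ (le1 _ (coorbit_refl g1 xi1 G11))) => s1 Os1.
exact: zclosure_sub (coorbit_block eeta Os1 Os2).
Qed.

Theorem orbit_le_dual_block xi1 eta1 xi2 eta2 xi eta :
  orbit_le G1 g1 xi1 eta1 -> orbit_le G2 g2 xi2 eta2 ->
  (forall x, g x -> xi x = dual_block xi1 xi2 x) ->
  (forall x, g x -> eta x = dual_block eta1 eta2 x) ->
  orbit_le G g xi eta.
Proof.
move=> le1 le2 exi eeta zeta [h [Gh ezeta]].
have clxi : zclosure (dual_coord g) (coorbit G g eta) xi.
  apply: zclosure_dual_agree (zclosure_dual_block le1 le2 eeta).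
  by move=> x /exi.
have clhxi : zclosure (dual_coord g) (coorbit G g eta) (coact h xi).
  apply: (zclosure_image (dual_coord_coact Gh) _ clxi) => s Os.
  exact: zclosure_sub (coorbit_coact Gh Os).
by apply: zclosure_dual_agree clhxi => x /ezeta.
Qed.
End OrbitClosureBlock.
End CoadjointAction.

Section MatrixForms.
Variable k : fieldType.

Definition mxform m n (M : 'M[k]_(m, n)) (u : 'cV[k]_m) (w : 'cV[k]_n) : k :=
  (u^T *m M *m w) 0 0.

Definition alt_form n (N : 'M[k]_n) : Prop := forall v, mxform N v v = 0.

Section Bilinearity.
Variables m n : nat.
Implicit Types (M : 'M[k]_(m, n)) (u : 'cV[k]_m) (w : 'cV[k]_n).

Lemma mxformDm M M' u w : mxform (M + M') u w = mxform M u w + mxform M' u w.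
Proof. by rewrite /mxform mulmxDr mulmxDl mxE. Qed.

Lemma mxformBm M M' u w : mxform (M - M') u w = mxform M u w - mxform M' u w.
Proof. by rewrite /mxform mulmxBr mulmxBl !mxE. Qed.

Lemma mxform0m u w : mxform 0 u w = 0.
Proof. by rewrite /mxform mulmx0 mul0mx mxE. Qed.

Lemma mxformDl M u u' w : mxform M (u + u') w = mxform M u w + mxform M u' w.
Proof. by rewrite /mxform linearD /= !mulmxDl mxE. Qed.

Lemma mxformDr M u w w' : mxform M u (w + w') = mxform M u w + mxform M u w'.
Proof. by rewrite /mxform mulmxDr mxE. Qed.

Lemma mxform0l M w : mxform M 0 w = 0.
Proof. by rewrite /mxform trmx0 !mul0mx mxE. Qed.

Lemma mxform0r M u : mxform M u 0 = 0.
Proof. by rewrite /mxform mulmx0 mxE. Qed.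

Lemma mxform_tr M u w : mxform M^T w u = mxform M u w.
Proof.
rewrite /mxform; transitivity ((u^T *m M *m w)^T 0 0); last by rewrite mxE.
by rewrite !trmx_mul trmxK mulmxA.
Qed.

Lemma mxform_mull p M (a : 'M[k]_(m, p)) (u : 'cV[k]_p) w :
  mxform M (a *m u) w = mxform (a^T *m M) u w.
Proof. by rewrite /mxform trmx_mul !mulmxA. Qed.

Lemma mxform_mulr p M (b : 'M[k]_(n, p)) u (w : 'cV[k]_p) :
  mxform M u (b *m w) = mxform (M *m b) u w.
Proof. by rewrite /mxform !mulmxA. Qed.

Lemma mxform_delta M i j : mxform M (delta_mx i 0) (delta_mx j 0) = M i j.
Proof. by rewrite /mxform trmx_delta -rowE -colE !mxE. Qed.

Lemma mxform_eq0 M : (forall u w, mxform M u w = 0) -> M = 0.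
Proof. by move=> h; apply/matrixP => i j; rewrite -mxform_delta h mxE. Qed.
End Bilinearity.

Lemma mxform_block m1 m2 n1 n2 (M1 : 'M[k]_(m1, n1)) M2 M3 (M4 : 'M[k]_(m2, n2))
    u1 u2 w1 w2 :
  mxform (block_mx M1 M2 M3 M4) (col_mx u1 u2) (col_mx w1 w2) =
  mxform M1 u1 w1 + mxform M2 u1 w2 + mxform M3 u2 w1 + mxform M4 u2 w2.
Proof.
rewrite /mxform tr_col_mx mul_row_block mul_row_col !mulmxDl !mxE.
by rewrite -!addrA; congr (_ + _); rewrite !addrA; congr (_ + _); rewrite addrC.
Qed.

Lemma mxform_block_diag m1 m2 n1 n2 (M1 : 'M[k]_(m1, n1)) (M2 : 'M[k]_(m2, n2))
    u1 u2 w1 w2 :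
  mxform (block_mx M1 0 0 M2) (col_mx u1 u2) (col_mx w1 w2) =
  mxform M1 u1 w1 + mxform M2 u2 w2.
Proof. by rewrite mxform_block !mxform0m !addr0. Qed.

Lemma mxform_nondeg_unit n (J : 'M[k]_n) :
  (forall v, (forall w, mxform J v w = 0) -> v = 0) -> J \in unitmx.
Proof.
move=> h; rewrite -row_free_unit -kermx_eq0; apply/eqP/row_matrixP => i.
have rJ : row i (kermx J) *m J = 0 by apply/sub_kermxP; exact: row_sub.
rewrite row0 -[row i _]trmxK (h (row i (kermx J))^T) ?trmx0 // => w.
by rewrite /mxform trmxK rJ mul0mx mxE.
Qed.

Lemma mxtrace_block_diag_mul n1 n2 (X1 : 'M[k]_n1) (X2 : 'M[k]_n2) x :
  \tr (block_mx X1 0 0 X2 *m x) = \tr (X1 *m ulsubmx x) + \tr (X2 *m drsubmx x).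
Proof. by rewrite -{1}[x]submxK mulmx_block mxtrace_block !mul0mx addr0 add0r. Qed.

Section Char2.
Hypothesis hchar : 2%N \in [pchar k].

Lemma oppmx_pchar2 m n (M : 'M[k]_(m, n)) : - M = M.
Proof. by apply/matrixP => i j; rewrite mxE oppr_pchar2. Qed.

Lemma addmx_pchar2 m n (M : 'M[k]_(m, n)) : M + M = 0.
Proof. by apply/eqP; rewrite addr_eq0 oppmx_pchar2. Qed.

Lemma alt_form_entries n (N : 'M[k]_n) : alt_form N ->
  (forall i, N i i = 0) /\ (forall i j, N j i = N i j).
Proof.
move=> aN; have diag i : N i i = 0 by rewrite -mxform_delta aN.
split => // i j; have := aN (delta_mx i 0 + delta_mx j 0).
rewrite !mxformDl !mxformDr !mxform_delta !diag add0r addr0 => /eqP.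
by rewrite addr_eq0 => /eqP ->; rewrite oppr_pchar2.
Qed.

Lemma alt_form_tr n (N : 'M[k]_n) : alt_form N -> N^T = N.
Proof.
by move=> /alt_form_entries [_ sN]; apply/matrixP => i j; rewrite mxE sN.
Qed.

(* An alternating matrix is L + L^T with L strictly lower triangular, and
   \tr (P *m L^T) = \tr (P *m L) for symmetric P. *)
Lemma mxtrace_sym_alt n (P N : 'M[k]_n) : P^T = P -> alt_form N ->
  \tr (P *m N) = 0.
Proof.
move=> sP /alt_form_entries [diag sN].
pose L := \matrix_(i, j) if (j < i)%N then N i j else 0.
have -> : N = L + L^T.
  apply/matrixP => i j; rewrite !mxE.
  case: (ltngtP j i) => [ji|ij|/val_inj ->].
  - by rewrite addr0.
  - by rewrite add0r sN.
  - by rewrite diag addr0.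
rewrite mulmxDr mxtraceD.
rewrite -[\tr (P *m L^T)]mxtrace_tr trmx_mul trmxK sP mxtrace_mulC.
exact: addrr_pchar2.
Qed.

(* For x = y B (i.e. x vanishes on the radical of B) and B D symmetric,
   B D = B F B with F = E B D E^T for a generalised inverse E of B, so
   \tr (D x) = \tr (F (B y B)) with B y B = (x^T B)^T alternating. *)
Lemma mxtrace_selfadj_alt n (B D x : 'M[k]_n) : B^T = B -> B *m D = D^T *m B ->
  alt_form (x^T *m B) -> x *m cokermx B = 0 -> \tr (D *m x) = 0.
Proof.
move=> sB hD ax xc.
have [y ex] : exists y, x = y *m B by apply/submxP; rewrite submxE xc.
rewrite {}ex {xc} in ax *.
have [E BEB] : exists E, B *m E *m B = B.
  by exists (pinvmx B); exact: mulmxKpV (submx_refl B).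
have [M eM] : {M | M = B *m D} by exists (B *m D).
have sM : M^T = M by rewrite eM trmx_mul sB hD.
have BEM : B *m E *m M = M by rewrite eM mulmxA BEB.
have MEB : M *m E^T *m B = M.
  by rewrite -[RHS]sM -[in RHS]BEM !trmx_mul sM sB mulmxA.
have hM : M = B *m (E *m M *m E^T) *m B by rewrite !mulmxA BEM MEB.
rewrite mxtrace_mulC -mulmxA -eM hM.
rewrite (mxtrace_mulC y) -!mulmxA (mxtrace_mulC B) -!mulmxA.
have -> : E *m (M *m (E^T *m (B *m (y *m B))))
          = E *m M *m E^T *m (B *m (y *m B)) by rewrite !mulmxA.
apply: mxtrace_sym_alt; first by rewrite !trmx_mul trmxK sM mulmxA.
move=> v; rewrite -mxform_tr.
have -> : (B *m (y *m B))^T = (y *m B)^T *m B by rewrite !trmx_mul sB.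
exact: ax.
Qed.
End Char2.
End MatrixForms.

Section LieAlgebra.
Variable k : closedFieldType.

Lemma poly_vanishing_eq0 (p : {poly k}) : (forall t, p.[t] = 0) -> p = 0.
Proof.
move=> h; apply/eqP; apply/negP => /negP /closed_nonrootP [t].
by rewrite /root h eqxx.
Qed.

Lemma polyfun_differential n (f : 'M[k]_n -> k) : polyfun (@mx_coord k n) f ->
  exists d : 'M[k]_n -> k, (forall c x y, d (c *: x + y) = c * d x + d y) /\
    forall x, exists p : {poly k},
      (forall t, f (1%:M + t *: x) = p.[t]) /\ p`_1 = d x.
Proof.
elim=> {f} [f [i [j fe]]|c|f g _ [df [dfl dfp]] _ [dg [dgl dgp]]
           |f g _ [df [dfl dfp]] _ [dg [dgl dgp]]].
- exists (fun x => x i j); split; first by move=> c x y; rewrite !mxE.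
  move=> x; exists (((1%:M : 'M[k]_n) i j)%:P + x i j *: 'X); split.
    by move=> t; rewrite fe hornerD hornerC hornerZ hornerX !mxE mulrC.
  by rewrite coefD coefC coefZ coefX add0r mulr1.
- exists (fun _ => 0); split; first by move=> *; rewrite mulr0 addr0.
  by move=> x; exists c%:P; split; [move=> t; rewrite hornerC | rewrite coefC].
- exists (fun x => df x + dg x); split; first by move=> c x y; rewrite dfl dgl; ring.
  move=> x; have [p [pe p1]] := dfp x; have [q [qe q1]] := dgp x.
  exists (p + q); split; first by move=> t; rewrite hornerD pe qe.
  by rewrite coefD p1 q1.
- exists (fun x => df x * g 1%:M + f 1%:M * dg x); split.
    by move=> c x y; rewrite dfl dgl; ring.
  move=> x; have [p [pe p1]] := dfp x; have [q [qe q1]] := dgp x.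
  exists (p * q); split; first by move=> t; rewrite hornerM pe qe.
  have p0 : p`_0 = f 1%:M by rewrite -horner_coef0 -pe scale0r addr0.
  have q0 : q`_0 = g 1%:M by rewrite -horner_coef0 -qe scale0r addr0.
  rewrite coefM big_ord_recr big_ord_recr big_ord0 /= add0r.
  by rewrite subnn subn0 p0 q0 p1 q1 addrC.
Qed.

Section Tangent.
Variables (n : nat) (H : 'M[k]_n -> Prop).

Lemma lie_differential f x : polyfun (@mx_coord k n) f ->
  (forall a, H a -> f a = 0) -> lie H x ->
  forall p : {poly k}, (forall t, f (1%:M + t *: x) = p.[t]) -> p`_1 = 0.
Proof.
move=> pf fH lx p pe; have [q [qe q1]] := lx f pf fH.
suff -> : p = q by [].
apply/eqP; rewrite -subr_eq0; apply/eqP; apply: poly_vanishing_eq0 => t.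
by rewrite hornerD hornerN -pe qe subrr.
Qed.

Lemma lie_curve x : (forall t, H (1%:M + t *: x)) -> lie H x.
Proof.
move=> hc f pf fH; exists 0; split; last by rewrite coef0.
by move=> t; rewrite horner0 fH.
Qed.

Lemma lie_conj h x : h \in unitmx ->
  (forall a, H a -> H (invmx h *m a *m h)) ->
  lie H x -> lie H (invmx h *m x *m h).
Proof.
move=> uh hH lx f pf fH.
have pconj : polymx (fun a : 'M[k]_n => invmx h *m a *m h).
  by apply: polymxM; [apply: polymxM; [apply: polymx_const|apply: polymx_id]
                     |apply: polymx_const].
have [p [pe p1]] := lx _ (polyfun_polymx_comp pconj pf) (fun a Ha => fH _ (hH a Ha)).
exists p; split => // t; rewrite -pe /=.
by rewrite mulmxDr mulmxDl mulmx1 mulVmx // -scalemxAr -scalemxAl.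
Qed.
End Tangent.
End LieAlgebra.

Section Symplectic.
Variable k : closedFieldType.
Hypothesis hchar : 2%N \in [pchar k].

(* The symmetric matrices are spanned by the w w^T in characteristic 2,
   since a linear form is Y |-> \tr (Y C^T) and w^T C w = 0 for all w makes
   C alternating. *)
Lemma linear_sym_eq0 n (phi : 'M[k]_n -> k) :
  (forall c x y, phi (c *: x + y) = c * phi x + phi y) ->
  (forall w : 'cV[k]_n, phi (w *m w^T) = 0) -> forall S, S^T = S -> phi S = 0.
Proof.
move=> phil phiw S sS.
have phi0 : phi 0 = 0.
  by have := phil (-1) 0 0; rewrite scaler0 addr0 mulN1r addNr.
have phiD : {morph phi : x y / x + y >-> x + y}.
  by move=> x y; have := phil 1 x y; rewrite scale1r mul1r.
have phiZ c x : phi (c *: x) = c * phi x.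
  by have := phil c x 0; rewrite addr0 phi0 addr0.
pose C := \matrix_(a, b) phi (delta_mx a b).
have phiE Y : phi Y = \tr (Y *m C^T).
  rewrite {1}(matrix_sum_delta Y) (big_morph phi phiD phi0).
  rewrite /mxtrace; apply: eq_bigr => i _.
  rewrite (big_morph phi phiD phi0) mxE; apply: eq_bigr => j _.
  by rewrite phiZ !mxE.
rewrite phiE; apply: (mxtrace_sym_alt hchar sS) => w.
by rewrite /mxform -trace_mx11 mxtrace_mulC mulmxA -phiE.
Qed.

Lemma quad_form_1D n (J X : 'M[k]_n) t :
  (1%:M + t *: X)^T *m J *m (1%:M + t *: X) =
  J + t *: (X^T *m J + J *m X) + (t * t) *: (X^T *m J *m X).
Proof.
rewrite [(_ + _)^T]linearD /= linearZ /= trmx1 !mulmxDl !mulmxDr !mul1mx !mulmx1.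
rewrite -!scalemxAl -!scalemxAr !scalerA scalerDr.
by rewrite !addrA; congr (_ + _); rewrite -!addrA; congr (_ + _); rewrite addrC.
Qed.

Section SympForm.
Variables (n : nat) (J : 'M[k]_n).

Definition sp_mx (x : 'M[k]_n) : Prop := x^T *m J + J *m x = 0.

Lemma Sp_mx_eq a : Sp J a -> a^T *m J *m a = J.
Proof.
case=> _ h; apply/eqP; rewrite -subr_eq0; apply/eqP; apply: mxform_eq0 => u w.
by rewrite mxformBm -mxform_mulr -mxform_mull [mxform J _ _]h subrr.
Qed.

Lemma Sp_of_mx_eq a : a \in unitmx -> a^T *m J *m a = J -> Sp J a.
Proof.
by move=> ua e; split => // v w; rewrite -[bform _ _ _]/(mxform _ _ _)
  mxform_mull mxform_mulr e.
Qed.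

Lemma Sp_submonoid : unit_submonoid (Sp J).
Proof.
split; first by split; [exact: unitmx1 | move=> v w; rewrite !mul1mx].
  by move=> a [].
move=> a b [ua ha] [ub hb]; split; first by rewrite unitmx_mul ua ub.
by move=> v w; rewrite -!mulmxA ha hb.
Qed.

Lemma SpV a : Sp J a -> Sp J (invmx a).
Proof.
move=> [ua ha]; split; first by rewrite unitmx_inv.
by move=> v w; rewrite -ha !mulmxA !mulmxV ?mul1mx.
Qed.

Lemma lie_Sp_sp_mx x : lie (Sp J) x -> sp_mx x.
Proof.
move=> lx; apply/matrixP => i j.
pose f (a : 'M[k]_n) := (a^T *m J *m a) i j - J i j.
have pquad : polymx (fun a : 'M[k]_n => a^T *m J *m a).
  apply: polymxM; last exact: polymx_id.
  by apply: polymxM; [apply/polymx_tr/polymx_id | apply: polymx_const].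
have pf : polyfun (@mx_coord k n) f by apply: PFadd; [apply: pquad|apply: PFconst].
have fSp a : Sp J a -> f a = 0 by move/Sp_mx_eq; rewrite /f => ->; rewrite subrr.
pose q := (x^T *m J + J *m x) i j *: 'X + (x^T *m J *m x) i j *: 'X^2.
have qe t : f (1%:M + t *: x) = q.[t].
  rewrite /f quad_form_1D /q hornerD !hornerZ hornerX hornerXn !mxE.
  by rewrite expr2; ring.
have := lie_differential pf fSp lx qe.
by rewrite /q coefD !coefZ coefX coefXn /= mulr1 mulr0 addr0 => ->; rewrite mxE.
Qed.

Hypotheses (uJ : J \in unitmx) (aJ : alt_form J).

Lemma Sp_transvection (w : 'cV[k]_n) t :
  Sp J (1%:M + t *: (invmx J *m (w *m w^T))).
Proof.
have sJ := alt_form_tr hchar aJ.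
have [u eu] : {u | u = invmx J *m w} by exists (invmx J *m w).
have Ju : J *m u = w by rewrite eu mulKVmx.
have uJ' : u^T *m J = w^T by rewrite -{1}sJ -trmx_mul Ju.
have uJu : u^T *m J *m u = 0.
  by apply/matrixP => i j; rewrite !ord1 [RHS]mxE; exact: aJ.
have wu : w^T *m u = 0 by rewrite -{1}Ju trmx_mul sJ uJu.
have [N eN] : {N | N = u *m w^T} by exists (u *m w^T).
have -> : invmx J *m (w *m w^T) = N by rewrite eN eu mulmxA.
have NJ : N^T *m J + J *m N = 0.
  by rewrite eN trmx_mul trmxK -mulmxA uJ' mulmxA Ju addmx_pchar2.
have NJN : N^T *m J *m N = 0.
  by rewrite eN trmx_mul trmxK !mulmxA -[w *m u^T *m J]mulmxA
    -[w *m (u^T *m J) *m u]mulmxA uJu mulmx0 mul0mx.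
apply: Sp_of_mx_eq; last by rewrite quad_form_1D NJ NJN !scaler0 !addr0.
have [] // := @mulmx1_unit _ _ (1%:M + t *: N) (1%:M + t *: N).
rewrite mulmxDl !mulmxDr !mul1mx !mulmx1 -scalemxAl -scalemxAr scalerA.
have -> : N *m N = 0 by rewrite eN mulmxA -[u *m w^T *m u]mulmxA wu mulmx0 mul0mx.
by rewrite scaler0 addr0 -addrA -scalerDl (addrr_pchar2 hchar) scale0r addr0.
Qed.

(* The differential at 1 of a polynomial function vanishing on Sp J kills
   each J^-1 w w^T (tangent to the transvections), hence J^-1 S for every
   symmetric S, in particular x = J^-1 (J x). *)
Lemma sp_mx_lie_Sp x : sp_mx x -> lie (Sp J) x.
Proof.
move=> sx f pf fSp; have [d [dl dp]] := polyfun_differential pf.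
pose phi (Y : 'M[k]_n) := d (invmx J *m Y).
have phil c y z : phi (c *: y + z) = c * phi y + phi z.
  by rewrite /phi mulmxDr -scalemxAr dl.
have phiw (w : 'cV[k]_n) : phi (w *m w^T) = 0.
  have lw : lie (Sp J) (invmx J *m (w *m w^T)).
    by apply: lie_curve => t; apply: Sp_transvection.
  have [p [pe p1]] := dp (invmx J *m (w *m w^T)).
  by rewrite /phi -p1 (lie_differential pf fSp lw pe).
have sJx : (J *m x)^T = J *m x.
  rewrite trmx_mul (alt_form_tr hchar aJ).
  by move/eqP: sx; rewrite addr_eq0 => /eqP ->; rewrite oppmx_pchar2.
have dx : d x = 0 by have := linear_sym_eq0 phil phiw sJx; rewrite /phi mulKmx.
by have [p [pe p1]] := dp x; exists p; rewrite p1.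
Qed.
End SympForm.

Section SymplecticBlock.
Variables (n1 n2 : nat) (J1 : 'M[k]_n1) (J2 : 'M[k]_n2).
Hypotheses (nd1 : symp_nondeg J1) (nd2 : symp_nondeg J2).

Let J := block_mx J1 0 0 J2.
Let uJ1 : J1 \in unitmx. Proof. by apply: mxform_nondeg_unit; case: nd1. Qed.
Let uJ2 : J2 \in unitmx. Proof. by apply: mxform_nondeg_unit; case: nd2. Qed.
Let aJ1 : alt_form J1. Proof. by case: nd1. Qed.
Let aJ2 : alt_form J2. Proof. by case: nd2. Qed.
Let uJ : J \in unitmx. Proof. by rewrite block_diag_mx_unit uJ1 uJ2. Qed.
Let aJ : alt_form J.
Proof. by move=> v; rewrite -[v]vsubmxK mxform_block_diag aJ1 aJ2 addr0. Qed.

Lemma Sp_block h1 h2 : Sp J1 h1 -> Sp J2 h2 -> Sp J (block_mx h1 0 0 h2).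
Proof.
move=> s1 s2; apply: Sp_of_mx_eq.
  by rewrite block_diag_mx_unit; case: s1 => -> _; case: s2 => -> _.
rewrite tr_block_mx !trmx0 /J !mulmx_block !mulmx0 !mul0mx !addr0 !add0r.
by rewrite !mul0mx (Sp_mx_eq s1) (Sp_mx_eq s2).
Qed.

Lemma sp_mx_block x : sp_mx J x -> sp_mx J1 (ulsubmx x) /\ sp_mx J2 (drsubmx x).
Proof.
rewrite /sp_mx -[x]submxK tr_block_mx /J !mulmx_block !mulmx0 !mul0mx.
rewrite !addr0 !add0r add_block_mx !block_mxKul !block_mxKdr => e.
have := congr1 ulsubmx e; have := congr1 drsubmx e.
by rewrite -(block_mx0 k n1 n2 n1 n2) !block_mxKul !block_mxKdr => -> ->.
Qed.

(* The representing matrix X of xi differs from diag(X1, X2) by D with J D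
   alternating, and \tr (D x) = \tr ((J D) (x J^-1)) with x J^-1 symmetric. *)
Lemma sp_embed_dual_block xi1 xi2 xi : sp_embed J1 J2 xi1 xi2 xi ->
  forall x, lie (Sp J) x -> xi x = dual_block xi1 xi2 x.
Proof.
move=> [X1 [X2 [X [r1 r2 r hq]]]] x /lie_Sp_sp_mx sx.
have [/(sp_mx_lie_Sp uJ1 aJ1) s1 /(sp_mx_lie_Sp uJ2 aJ2) s2] := sp_mx_block sx.
rewrite (r x (sp_mx_lie_Sp uJ aJ sx)) /dual_block (r1 _ s1) (r2 _ s2).
set Xb := block_mx X1 0 0 X2.
rewrite -[X](subrK Xb) mulmxDl mxtraceD mxtrace_block_diag_mul addrC.
suff -> : \tr ((X - Xb) *m x) = 0 by rewrite addr0.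
have aD : alt_form (J *m (X - Xb)).
  move=> v; rewrite mulmxBr mxformBm -!mxform_mulr -[v]vsubmxK.
  rewrite -[mxform J _ (X *m _)]/(qform_of J X _) hq.
  rewrite /Xb /J mul_block_col !mul0mx !addr0 !add0r mxform_block_diag.
  exact: subrr.
rewrite -[X - Xb](mulKmx uJ) mxtrace_mulC [x *m _]mulmxA.
apply: (mxtrace_sym_alt hchar _ aD).
have xT : x^T *m J = J *m x.
  by move/eqP: sx; rewrite addr_eq0 => /eqP ->; rewrite oppmx_pchar2.
rewrite trmx_mul trmx_inv (alt_form_tr hchar aJ).
by rewrite -[x^T](mulmxK uJ) xT !mulmxA mulVmx // mul1mx.
Qed.

Lemma orbit_le_Sp_block (xi1 eta1 : 'M[k]_n1 -> k) (xi2 eta2 : 'M[k]_n2 -> k)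
    (xi eta : 'M[k]_(n1 + n2) -> k) :
  orbit_le (Sp J1) (lie (Sp J1)) xi1 eta1 ->
  orbit_le (Sp J2) (lie (Sp J2)) xi2 eta2 ->
  sp_embed J1 J2 xi1 xi2 xi -> sp_embed J1 J2 eta1 eta2 eta ->
  orbit_le (Sp J) (lie (Sp J)) xi eta.
Proof.
move=> le1 le2 exi eeta.
apply: (orbit_le_dual_block (Sp_submonoid J) (Sp_submonoid J1) (Sp_submonoid J2)
  _ Sp_block _ le1 le2 (sp_embed_dual_block exi) (sp_embed_dual_block eeta)).
- move=> h x Sh lx; have [_ unitSp mulSp] := Sp_submonoid J.
  apply: lie_conj lx; first exact: unitSp.
  by move=> a Sa; exact: mulSp (mulSp _ _ (SpV Sh) Sa) Sh.
- move=> x /lie_Sp_sp_mx /sp_mx_block [s1 s2].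
  by split; [exact: (sp_mx_lie_Sp uJ1 aJ1 s1) | exact: (sp_mx_lie_Sp uJ2 aJ2 s2)].
Qed.
End SymplecticBlock.
End Symplectic.

Section Orthogonal.
Variable k : fieldType.

Lemma tr_add_trmx n (A : 'M[k]_n) : (A + A^T)^T = A + A^T.
Proof. by rewrite linearD /= trmxK addrC. Qed.

Lemma QfE n (A : 'M[k]_n) v : Qf A v = mxform A v v.
Proof. by []. Qed.

Lemma polarE n (A : 'M[k]_n) v w : polar A v w = mxform (A + A^T) v w.
Proof.
rewrite /polar !QfE mxformDl !mxformDr mxformDm mxform_tr.
ring.
Qed.

Lemma polar0l n (A : 'M[k]_n) w : polar A 0 w = 0.
Proof. by rewrite polarE mxform0l. Qed.

Lemma polar0r n (A : 'M[k]_n) v : polar A v 0 = 0.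
Proof. by rewrite polarE mxform0r. Qed.

Lemma altform_ofE n (A X : 'M[k]_n) v w :
  altform_of A X v w = mxform (X^T *m (A + A^T) - (A + A^T) *m X) v w.
Proof. by rewrite /altform_of !polarE mxform_mull mxform_mulr mxformBm. Qed.

Section OrthogonalGroup.
Variables (n : nat) (A : 'M[k]_n).

Lemma O_polar h : Ogrp A h -> forall v w, polar A (h *m v) (h *m w) = polar A v w.
Proof. by case=> _ hQ v w; rewrite /polar -mulmxDr !hQ. Qed.

Lemma O_submonoid : unit_submonoid (Ogrp A).
Proof.
split; first by split; [exact: unitmx1 | move=> v; rewrite mul1mx].
  by move=> a [].
move=> a b [ua ha] [ub hb]; split; first by rewrite unitmx_mul ua ub.
by move=> v; rewrite -mulmxA ha hb.
Qed.

Lemma o_lie_conj h x : Ogrp A h -> o_lie A x -> o_lie A (invmx h *m x *m h).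
Proof.
move=> Oh [ox rx]; have hp := O_polar Oh; have uh : h \in unitmx by case: Oh.
split=> [v|v rv].
  by rewrite -hp !mulmxA mulmxV // mul1mx -!mulmxA; apply: ox.
have rhv : radb A (h *m v) by move=> w; rewrite -[w](mulKVmx uh) hp; apply: rv.
by rewrite -!mulmxA (rx _ rhv) mulmx0.
Qed.

Lemma o_lie_alt x : o_lie A x -> alt_form (x^T *m (A + A^T)).
Proof. by case=> ox _ v; rewrite -mxform_mull -polarE. Qed.

Lemma o_lie_coker x : o_lie A x -> x *m cokermx (A + A^T) = 0.
Proof.
case=> _ rx; apply/matrixP => i j; rewrite [RHS]mxE.
have radC : radb A (col j (cokermx (A + A^T))).
  move=> w; rewrite polarE -mxform_tr tr_add_trmx /mxform colE mulmxA.
  by rewrite -[w^T *m _ *m _]mulmxA mulmx_coker mulmx0 mul0mx mxE.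
have := congr1 (fun M : 'cV[k]_n => M i 0) (rx _ radC).
by rewrite colE mulmxA -colE !mxE.
Qed.

Lemma SO_sub_O h : SOgrp A h -> Ogrp A h.
Proof. by case=> S [SO _ _ Sh]; apply: SO. Qed.

(* The product of two connected sets through 1 is the union of the
   translates a' * S', all meeting S * 1. *)
Lemma SO_submonoid : unit_submonoid (SOgrp A).
Proof.
have [O1 unitO mulO] := O_submonoid.
split; [|by move=> a /SO_sub_O /unitO|].
  by exists (eq^~ 1%:M); split => //; [move=> b -> | exact: zconnected1].
move=> a b [S [SO cS S1 Sa]] [S' [SO' cS' S'1 S'b]].
exists (fun c => exists a', S a' /\ exists2 b', S' b' & c = a' *m b'); split.
- by move=> _ [a' [Sa' [b' S'b' ->]]]; apply: mulO; [apply: SO | apply: SO'].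
- apply: (zconnected_union cS) => [a' Sa'|u [a' [Sa' [b' S'b' ->]]]].
    by exists a'; split => //; exists 1%:M; rewrite ?mulmx1.
  exists (fun c => exists2 b'', S' b'' & c = a' *m b''); split.
  + apply: zconnected_image cS'.
    by apply: polymxM; [apply: polymx_const | apply: polymx_id].
  + by move=> _ [b'' S'b'' ->]; exists a'; split => //; exists b''.
  + by exists b'.
  + by exists a'; [| exists 1%:M; rewrite ?mulmx1].
- by exists 1%:M; split => //; exists 1%:M; rewrite ?mulmx1.
- by exists a; split => //; exists b.
Qed.
End OrthogonalGroup.

Section OrthogonalBlock.
Variables (n1 n2 : nat) (A1 : 'M[k]_n1) (A2 : 'M[k]_n2).
Let A := block_mx A1 0 0 A2.

Lemma polar_block v1 v2 w1 w2 :
  polar A (col_mx v1 v2) (col_mx w1 w2) = polar A1 v1 w1 + polar A2 v2 w2.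
Proof.
rewrite !polarE /A tr_block_mx !trmx0 add_block_mx !addr0.
exact: mxform_block_diag.
Qed.

Lemma O_block h1 h2 : Ogrp A1 h1 -> Ogrp A2 h2 -> Ogrp A (block_mx h1 0 0 h2).
Proof.
move=> [u1 q1] [u2 q2]; split; first by rewrite block_diag_mx_unit u1 u2.
move=> v; rewrite -[v]vsubmxK mul_block_col !mul0mx !addr0 !add0r.
by rewrite !QfE /A !mxform_block_diag -!QfE q1 q2.
Qed.

Lemma o_lie_block x : o_lie A x -> o_lie A1 (ulsubmx x) /\ o_lie A2 (drsubmx x).
Proof.
move=> [ox rx].
have xl (v1 : 'cV[k]_n1) :
    x *m col_mx v1 0 = col_mx (ulsubmx x *m v1) (dlsubmx x *m v1).
  by rewrite -{1}[x]submxK mul_block_col !mulmx0 !addr0.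
have xr (v2 : 'cV[k]_n2) :
    x *m col_mx 0 v2 = col_mx (ursubmx x *m v2) (drsubmx x *m v2).
  by rewrite -{1}[x]submxK mul_block_col !mulmx0 !add0r.
split; split.
- by move=> v1; have := ox (col_mx v1 0); rewrite xl polar_block polar0r addr0.
- move=> v1 r1.
  have r : radb A (col_mx v1 0).
    by move=> w; rewrite -[w]vsubmxK polar_block r1 add0r polar0l.
  have /(congr1 usubmx) := rx _ r; rewrite xl col_mxKu => ->.
  by rewrite -(col_mx0 k n1 n2 1) col_mxKu.
- by move=> v2; have := ox (col_mx 0 v2); rewrite xr polar_block polar0r add0r.
- move=> v2 r2.
  have r : radb A (col_mx 0 v2).
    by move=> w; rewrite -[w]vsubmxK polar_block r2 addr0 polar0l.
  have /(congr1 dsubmx) := rx _ r; rewrite xr col_mxKd => ->.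
  by rewrite -(col_mx0 k n1 n2 1) col_mxKd.
Qed.

Lemma SO_block h1 h2 : SOgrp A1 h1 -> SOgrp A2 h2 -> SOgrp A (block_mx h1 0 0 h2).
Proof.
move=> [S1 [SO1 cS1 S11 Sh1]] [S2 [SO2 cS2 S21 Sh2]].
exists (fun c => exists a, S1 a /\ exists2 b, S2 b & c = block_mx a 0 0 b); split.
- by move=> _ [a [Sa [b Sb ->]]]; apply: O_block; [apply: SO1 | apply: SO2].
- apply: (zconnected_union (zconnected_image (polymx_block_diag_l 1%:M) cS1)).
    by move=> _ [a Sa ->]; exists a; split => //; exists 1%:M.
  move=> _ [a [Sa [b Sb ->]]].
  exists (fun c => exists2 b', S2 b' & c = block_mx a 0 0 b'); split.
  + exact: zconnected_image (polymx_block_diag_r a) cS2.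
  + by move=> _ [b' Sb' ->]; exists a; split => //; exists b'.
  + by exists b.
  + by exists (block_mx a 0 0 1%:M); [exists a | exists 1%:M].
- by exists 1%:M; split => //; exists 1%:M; rewrite // -scalar_mx_block.
- by exists h1; split => //; exists h2.
Qed.

Hypothesis hchar : 2%N \in [pchar k].

(* With B = A + A^T, the orthogonality of the sum of the alternating forms
   makes D = X - diag(X1, X2) self-adjoint for B. *)
Lemma o_embed_dual_block xi1 xi2 xi : o_embed A1 A2 xi1 xi2 xi ->
  forall x, o_lie A x -> xi x = dual_block xi1 xi2 x.
Proof.
move=> [X1 [X2 [X [r1 r2 r hq]]]] x ox.
have [o1 o2] := o_lie_block ox.
rewrite (r x ox) /dual_block (r1 _ o1) (r2 _ o2).
set Xb := block_mx X1 0 0 X2.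
rewrite -[X](subrK Xb) mulmxDl mxtraceD mxtrace_block_diag_mul addrC.
suff -> : \tr ((X - Xb) *m x) = 0 by rewrite addr0.
have [B eB] : {B | B = A + A^T} by exists (A + A^T).
have eBblock : B = block_mx (A1 + A1^T) 0 0 (A2 + A2^T).
  by rewrite eB /A tr_block_mx !trmx0 add_block_mx !addr0.
have altE (Y : 'M[k]_(n1 + n2)) u w :
    mxform (Y^T *m B - B *m Y) u w = altform_of A Y u w by rewrite altform_ofE eB.
have selfadj : B *m (X - Xb) = (X - Xb)^T *m B.
  apply/eqP; rewrite eq_sym -subr_eq0; apply/eqP/mxform_eq0 => u w.
  have -> : (X - Xb)^T *m B - B *m (X - Xb)
            = (X^T *m B - B *m X) - (Xb^T *m B - B *m Xb).
    rewrite linearB /= mulmxBl mulmxBr !opprB addrACA [RHS]addrACA.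
    by congr (_ + _); rewrite addrC.
  rewrite mxformBm altE -[u]vsubmxK -[w]vsubmxK hq !altform_ofE.
  rewrite eBblock /Xb tr_block_mx !trmx0 !mulmx_block !mulmx0 !mul0mx.
  rewrite !addr0 !add0r opp_block_mx add_block_mx !oppr0 !addr0.
  by rewrite mxform_block_diag subrr.
rewrite eB in selfadj.
exact: (mxtrace_selfadj_alt hchar (tr_add_trmx A) selfadj (o_lie_alt ox)
          (o_lie_coker ox)).
Qed.

Lemma orbit_le_SO_block (xi1 eta1 : 'M[k]_n1 -> k) (xi2 eta2 : 'M[k]_n2 -> k)
    (xi eta : 'M[k]_(n1 + n2) -> k) :
  orbit_le (SOgrp A1) (o_lie A1) xi1 eta1 ->
  orbit_le (SOgrp A2) (o_lie A2) xi2 eta2 ->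
  o_embed A1 A2 xi1 xi2 xi -> o_embed A1 A2 eta1 eta2 eta ->
  orbit_le (SOgrp A) (o_lie A) xi eta.
Proof.
move=> le1 le2 exi eeta.
apply: (orbit_le_dual_block (SO_submonoid A) (SO_submonoid A1) (SO_submonoid A2)
  _ SO_block o_lie_block le1 le2 (o_embed_dual_block exi) (o_embed_dual_block eeta)).
by move=> h x /SO_sub_O; apply: o_lie_conj.
Qed.
End OrthogonalBlock.
End Orthogonal.

Theorem lemma5p2 (k : closedFieldType) (hchar : 2%N \in [pchar k]) (n1 n2 : nat) :
  (* symplectic case *)
  (forall (J1 : 'M[k]_n1) (J2 : 'M[k]_n2),
    symp_nondeg J1 -> symp_nondeg J2 ->
    forall (xi1 eta1 : 'M[k]_n1 -> k) (xi2 eta2 : 'M[k]_n2 -> k)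
           (xi eta : 'M[k]_(n1 + n2) -> k),
    nilcone (Sp J1) (lie (Sp J1)) xi1 -> nilcone (Sp J1) (lie (Sp J1)) eta1 ->
    nilcone (Sp J2) (lie (Sp J2)) xi2 -> nilcone (Sp J2) (lie (Sp J2)) eta2 ->
    orbit_le (Sp J1) (lie (Sp J1)) xi1 eta1 ->
    orbit_le (Sp J2) (lie (Sp J2)) xi2 eta2 ->
    sp_embed J1 J2 xi1 xi2 xi -> sp_embed J1 J2 eta1 eta2 eta ->
    orbit_le (Sp (block_mx J1 0 0 J2)) (lie (Sp (block_mx J1 0 0 J2))) xi eta)
  /\
  (* orthogonal case *)
  (forall (A1 : 'M[k]_n1) (A2 : 'M[k]_n2),
    quad_nondeg A1 -> quad_nondeg A2 ->
    forall (xi1 eta1 : 'M[k]_n1 -> k) (xi2 eta2 : 'M[k]_n2 -> k)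
           (xi eta : 'M[k]_(n1 + n2) -> k),
    nilcone (SOgrp A1) (o_lie A1) xi1 -> nilcone (SOgrp A1) (o_lie A1) eta1 ->
    nilcone (SOgrp A2) (o_lie A2) xi2 -> nilcone (SOgrp A2) (o_lie A2) eta2 ->
    orbit_le (SOgrp A1) (o_lie A1) xi1 eta1 ->
    orbit_le (SOgrp A2) (o_lie A2) xi2 eta2 ->
    o_embed A1 A2 xi1 xi2 xi -> o_embed A1 A2 eta1 eta2 eta ->
    orbit_le (SOgrp (block_mx A1 0 0 A2)) (o_lie (block_mx A1 0 0 A2)) xi eta).
Proof.
split=> [J1 J2 nd1 nd2 | A1 A2 _ _] xi1 eta1 xi2 eta2 xi eta _ _ _ _.
- exact: (orbit_le_Sp_block hchar nd1 nd2).
- exact: (orbit_le_SO_block hchar).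
Qed.
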